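(* There is no set of first-order sentences in the signature consisting of a single binary relation symbol $\leq$ whose models are exactly the $\downarrow$-posets. In other words, the class of $\downarrow$-posets is not first-order axiomatizable in the language of posets.
   Context: A semilattice with identity is a set $S$ with a binary operation (written concatenatively) and an element $1\in S$ such that for all $s,t,u\in S$: $ss=s$, $st=ts$, $(st)u=s(tu)$, and $1s=s$. An action of such an $S$ on a set $C$ is a function $C\times S\to C$, $(c,s)\mapsto cs$, such that $c(st)=(cs)t$ and $c1=c$ for all $c\in C$, $s,t\in S$. Given such an action, define $c\leq d$ on $C$ iff there is $s\in S$ with $ds=c$; this is a partial order. A poset is called a $\downarrow$-poset if it is isomorphic to a poset arising in this way from some action of some semilattice with identity on some set. *)

From Stdlib Require Import Arith.

(* Formulas; variables are de Bruijn indices. *)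
Inductive formula : Type :=
| FRel : nat -> nat -> formula
| FEq : nat -> nat -> formula
| FFalse : formula
| FNot : formula -> formula
| FAnd : formula -> formula -> formula
| FOr : formula -> formula -> formula
| FImp : formula -> formula -> formula
| FAll : formula -> formula
| FEx : formula -> formula.

Fixpoint bounded (n : nat) (phi : formula) : Prop :=
  match phi with
  | FRel i j | FEq i j => i < n /\ j < n
  | FFalse => True
  | FNot p => bounded n p
  | FAnd p q | FOr p q | FImp p q => bounded n p /\ bounded n q
  | FAll p | FEx p => bounded (S n) p
  end.

Definition sentence (phi : formula) : Prop := bounded 0 phi.

Definition scons {M : Type} (a : M) (rho : nat -> M) : nat -> M :=
  fun n => match n with 0 => a | S k => rho k end.

Fixpoint sat {M : Type} (R : M -> M -> Prop) (rho : nat -> M) (phi : formula)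
  : Prop :=
  match phi with
  | FRel i j => R (rho i) (rho j)
  | FEq i j => rho i = rho j
  | FFalse => False
  | FNot p => ~ sat R rho p
  | FAnd p q => sat R rho p /\ sat R rho q
  | FOr p q => sat R rho p \/ sat R rho q
  | FImp p q => sat R rho p -> sat R rho q
  | FAll p => forall a : M, sat R (scons a rho) p
  | FEx p => exists a : M, sat R (scons a rho) p
  end.

Definition models {M : Type} (R : M -> M -> Prop) (T : formula -> Prop) : Prop :=
  forall phi, T phi -> forall rho : nat -> M, sat R rho phi.

Definition semilattice_with_identity {S : Type} (op : S -> S -> S) (one : S)
  : Prop :=
  (forall s, op s s = s) /\
  (forall s t, op s t = op t s) /\
  (forall s t u, op (op s t) u = op s (op t u)) /\
  (forall s, op one s = s).

Definition is_action {S C : Type} (op : S -> S -> S) (one : S)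
  (act : C -> S -> C) : Prop :=
  (forall c s t, act c (op s t) = act (act c s) t) /\
  (forall c, act c one = c).

Definition action_le {S C : Type} (act : C -> S -> C) (c d : C) : Prop :=
  exists s : S, act d s = c.

Definition down_poset {P : Type} (le : P -> P -> Prop) : Prop :=
  exists (S C : Type) (op : S -> S -> S) (one : S) (act : C -> S -> C),
    semilattice_with_identity op one /\ is_action op one act /\
    exists (f : P -> C) (g : C -> P),
      (forall x, g (f x) = x) /\ (forall c, f (g c) = c) /\
      (forall x y, le x y <-> action_le act (f x) (f y)).

From Stdlib Require Import ZArith Lia Classical FunctionalExtensionality
  PropExtensionality ProofIrrelevance ClassicalEpsilon.

(** A poset is a ↓-poset as soon as every [d <= c] makes [d] the greatest element below [c]
    of some projective down-set, i.e. a down-set [F] such that every element [y] has a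
    greatest element of [F] below it; conversely, in a ↓-poset the fixed points of an action
    element sending [c] to [d] form such an [F]. (The projective down-sets form a semilattice
    under intersection, acting by projection.)

    For a discrete linear order [O] with a ℤ-action by translations and an origin [0] (such
    as ℤ or ℤ ⊕ ℤ), the poset [gadget O] consists of a bottom [Bot], points [D <= C] and
    [E <= C, W], and for [i : O] points [X i], [Y i], [J i]: the [Y i] form a chain below [W],
    [J i] lies above [X i], [X (i+1)] and the [Y j] with [j <= i+1], and [X 0] and the [Y i]
    with [i <= 0] lie below [D]. Over ℤ, a projective down-set containing [D] but not [E]
    contains [X 0] and [Y 0], hence [J 0] (its greatest element below [J 0] lies above both),
    hence [X 1] and [Y 1], and so on; so it contains all [Y n], [n >= 0], and has no greatest
    element below [W]. Over ℤ ⊕ ℤ the [Y i] in such a down-set can stop at a point of the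
    second copy of ℤ, and the gadget is a ↓-poset. But the two gadgets are elementarily
    equivalent, by an Ehrenfeucht–Fraïssé argument on the index orders: with [n] rounds
    left, points closer than [2^(n+1)] keep their distance and farther ones only their
    order. *)

(** * ↓-posets and projective down-sets *)

Section ProjectiveDownsets.
Context {P : Type} (R : P -> P -> Prop).

Definition greatest_below (F : P -> Prop) (y m : P) : Prop :=
  F m /\ R m y /\ forall z, F z -> R z y -> R z m.

Definition projective_downset (F : P -> Prop) : Prop :=
  (forall x y, R x y -> F y -> F x) /\ forall y, exists m, greatest_below F y m.

Lemma projective_of_down_poset : down_poset R ->
  forall c d, R d c -> exists F, projective_downset F /\ greatest_below F c d.
Proof.
  intros (Sl & Ct & op & one & act & [Hidem [Hcomm _]] & [Hact _] &
          f & g & Hgf & Hfg & Hiso) c d Hdc.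
  set (dot x s := g (act (f x) s)).
  assert (dot_le : forall x s, R (dot x s) x).
  { intros x s. apply Hiso. exists s. unfold dot. now rewrite Hfg. }
  assert (le_dot : forall z x, R z x -> exists s, dot x s = z).
  { intros z x Hzx. apply Hiso in Hzx as [s Hs]. exists s. unfold dot. now rewrite Hs, Hgf. }
  assert (dot_dot : forall x s t, dot (dot x s) t = dot x (op s t)).
  { intros. unfold dot. now rewrite Hfg, Hact. }
  assert (dot_comm : forall x s t, dot (dot x s) t = dot (dot x t) s).
  { intros. now rewrite !dot_dot, Hcomm. }
  destruct (le_dot d c Hdc) as [s0 Hs0].
  set (Fix z := dot z s0 = z).
  assert (Hmax : forall y, greatest_below Fix y (dot y s0)).
  { intro y. split; [|split; [apply dot_le|]].
    - unfold Fix. now rewrite dot_dot, Hidem.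
    - intros z Fz Hzy. destruct (le_dot z y Hzy) as [t <-].
      unfold Fix in Fz. rewrite <- Fz, dot_comm. apply dot_le. }
  exists Fix. split; [split|].
  - intros x y Hxy Fy. destruct (le_dot x y Hxy) as [t <-].
    unfold Fix in *. now rewrite dot_comm, Fy.
  - intro y. exists (dot y s0). apply Hmax.
  - rewrite <- Hs0. apply Hmax.
Qed.

Hypothesis R_refl : forall x, R x x.
Hypothesis R_trans : forall x y z, R x y -> R y z -> R x z.
Hypothesis R_antisym : forall x y, R x y -> R y x -> x = y.

Lemma greatest_below_unique F y m m' :
  greatest_below F y m -> greatest_below F y m' -> m = m'.
Proof.
  intros [Fm [Hmy Hm]] [Fm' [Hm'y Hm']]. apply R_antisym; auto.
Qed.

Lemma projective_downset_full : projective_downset (fun _ => True).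
Proof.
  split; [tauto|]. intro y. exists y. repeat split; auto.
Qed.

Lemma projective_downset_inter F G : projective_downset F -> projective_downset G ->
  projective_downset (fun x => F x /\ G x).
Proof.
  intros [F_down F_max] [G_down G_max]. split.
  - intros x y Hxy [Fy Gy]. eauto.
  - intro y. destruct (F_max y) as [m1 [Fm1 [Hm1y Hm1]]].
    destruct (G_max m1) as [m2 [Gm2 [Hm2m1 Hm2]]].
    exists m2. repeat split; eauto.
    intros z [Fz Gz] Hzy. auto.
Qed.

Definition pdset := {F : P -> Prop | projective_downset F}.

Definition pdset_inter (F G : pdset) : pdset :=
  exist _ _ (projective_downset_inter _ _ (proj2_sig F) (proj2_sig G)).

Definition pdset_full : pdset := exist _ _ projective_downset_full.

Definition pdset_proj (y : P) (F : pdset) : P :=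
  proj1_sig (constructive_indefinite_description _ (proj2 (proj2_sig F) y)).

Lemma pdset_proj_spec y F : greatest_below (proj1_sig F) y (pdset_proj y F).
Proof.
  unfold pdset_proj. now destruct (constructive_indefinite_description _ _).
Qed.

Lemma pdset_ext (F G : pdset) : (forall x, proj1_sig F x <-> proj1_sig G x) -> F = G.
Proof.
  destruct F as [F HF], G as [G HG]; simpl; intro HFG.
  assert (F = G) as <-.
  { extensionality x. apply propositional_extensionality, HFG. }
  f_equal. apply proof_irrelevance.
Qed.

Lemma pdset_semilattice : semilattice_with_identity pdset_inter pdset_full.
Proof.
  repeat split; intros; apply pdset_ext; simpl; tauto.
Qed.

Lemma pdset_proj_action : is_action pdset_inter pdset_full pdset_proj.
Proof.
  split.
  - intros c F G. apply (greatest_below_unique (proj1_sig (pdset_inter F G)) c);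
      [apply pdset_proj_spec|].
    destruct (pdset_proj_spec c F) as [Fm [Hmc Hm]].
    destruct (pdset_proj_spec (pdset_proj c F) G) as [Gm' [Hm'm Hm']].
    repeat split; simpl; eauto.
    + destruct (proj2_sig F) as [F_down _]. eauto.
    + intros z [Fz Gz] Hzc. auto.
  - intro c. apply (greatest_below_unique (fun _ => True) c);
      [apply (pdset_proj_spec c pdset_full) | repeat split; auto].
Qed.

Lemma down_poset_of_projective :
  (forall c d, R d c -> exists F, projective_downset F /\ greatest_below F c d) ->
  down_poset R.
Proof.
  intro Hproj.
  exists pdset, P, pdset_inter, pdset_full, pdset_proj.
  split; [apply pdset_semilattice | split; [apply pdset_proj_action|]].
  exists (fun x => x), (fun x => x). repeat split; auto.
  - intro Hxy. destruct (Hproj y x Hxy) as [F [HF Hx]].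
    exists (exist _ F HF). eapply greatest_below_unique; [apply pdset_proj_spec | exact Hx].
  - intros [F <-]. apply pdset_proj_spec.
Qed.

End ProjectiveDownsets.

(** * Discrete orders with a ℤ-action *)

Local Open Scope Z_scope.

Record zorder := {
  zcar :> Type;
  zle : zcar -> zcar -> Prop;
  shift : zcar -> Z -> zcar;
  origin : zcar;
  zle_refl : forall a, zle a a;
  zle_trans : forall a b c, zle a b -> zle b c -> zle a c;
  zle_antisym : forall a b, zle a b -> zle b a -> a = b;
  zle_total : forall a b, zle a b \/ zle b a;
  shift0 : forall a, shift a 0 = a;
  shift_shift : forall a t u, shift (shift a t) u = shift a (t + u);
  zle_shift2 : forall a t u, zle (shift a t) (shift a u) <-> t <= u;
  zle_shift_mono : forall a b t, zle a b -> zle (shift a t) (shift b t);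
  zle_shift_interval : forall a b t, zle a b -> zle b (shift a t) ->
    exists w, 0 <= w <= t /\ b = shift a w }.

Arguments zle {_}. Arguments shift {_}. Arguments origin {_}.
Arguments zle_refl {_}. Arguments zle_trans {_ a b c}. Arguments zle_antisym {_ a b}.
Arguments zle_total {_}. Arguments shift0 {_}. Arguments shift_shift {_}.
Arguments zle_shift2 {_}. Arguments zle_shift_mono {_ a b}.
Arguments zle_shift_interval {_ a b t}.

Section ZorderFacts.
Context {O : zorder}.
Implicit Types a b c x y : O.

Lemma shift_inj a t u : shift a t = shift a u -> t = u.
Proof.
  intro E. apply Z.le_antisymm; apply (zle_shift2 a); rewrite E; apply zle_refl.
Qed.

Lemma shift_opp a t : shift (shift a t) (- t) = a.
Proof. now rewrite shift_shift, Z.add_opp_diag_r, shift0. Qed.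

Lemma eq_shift_sym a b t : b = shift a t <-> a = shift b (- t).
Proof.
  split; intros ->; [now rewrite shift_opp|].
  now rewrite shift_shift, Z.add_opp_diag_l, shift0.
Qed.

Lemma shift_eq_shift a c t s : shift a t = shift c s <-> c = shift a (t - s).
Proof.
  split; intro E.
  - rewrite <- (shift_opp c s), <- E, shift_shift. f_equal; lia.
  - rewrite E, shift_shift. f_equal; lia.
Qed.

Lemma shift_fixed_iff a t : a = shift a t <-> t = 0.
Proof.
  split; intro H.
  - rewrite <- (shift0 a) in H at 1. symmetry. now apply shift_inj in H.
  - now rewrite H, shift0.
Qed.

Lemma zle_shift_r a t : 0 <= t -> zle a (shift a t).
Proof. intro. rewrite <- (shift0 a) at 1. apply zle_shift2; lia. Qed.

Lemma zle_shift_l a t : t <= 0 -> zle (shift a t) a.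
Proof. intro. rewrite <- (shift0 a) at 2. apply zle_shift2; lia. Qed.

Lemma zle_flip_iff a b : zle b a <-> b = a \/ ~ zle a b.
Proof.
  split.
  - intro Hba. destruct (classic (zle a b)); [left; apply zle_antisym|right]; auto.
  - intros [-> | Hab]; [apply zle_refl | destruct (zle_total a b); tauto].
Qed.

Lemma zle_shift1_iff x y : zle x (shift y 1) <-> zle x y \/ x = shift y 1.
Proof.
  split.
  - intro Hx. destruct (zle_total x y) as [|Hyx]; [now left|].
    destruct (zle_shift_interval Hyx Hx) as [w [Hw ->]].
    assert (w = 0 \/ w = 1) as [-> | ->] by lia; [left; rewrite shift0; apply zle_refl | now right].
  - intros [Hxy | ->]; [|apply zle_refl].
    apply (zle_trans Hxy), zle_shift_r; lia.
Qed.

Lemma zle_shift_far x y T t : (forall w, -T < w < T -> x <> shift y w) -> -T < t < T ->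
  (zle x (shift y t) <-> zle x y).
Proof.
  intros Hfar Ht. split; intro Hx.
  - destruct (Z_lt_le_dec 0 t); [|apply (zle_trans Hx), zle_shift_l; lia].
    destruct (zle_total x y) as [|Hyx]; auto.
    destruct (zle_shift_interval Hyx Hx) as [w [Hw E]].
    exfalso. apply (Hfar w); [lia | exact E].
  - destruct (Z_le_gt_dec 0 t); [apply (zle_trans Hx), zle_shift_r; lia|].
    destruct (zle_total x (shift y t)) as [|Hyx]; auto.
    rewrite <- (shift_opp y t) in Hx.
    destruct (zle_shift_interval Hyx Hx) as [w [Hw E]].
    rewrite shift_shift in E. exfalso. apply (Hfar (t + w)); [lia | exact E].
Qed.

Lemma zle_shift_of_far a b T : zle a b -> (forall w, 0 <= w < T -> b <> shift a w) ->
  zle (shift a T) b.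
Proof.
  intros Hab Hfar. destruct (zle_total (shift a T) b) as [|Hb]; auto.
  destruct (zle_shift_interval Hab Hb) as [w [Hw ->]].
  destruct (Z.eq_dec w T) as [-> | Hne]; [apply zle_refl|].
  exfalso. apply (Hfar w); [lia | reflexivity].
Qed.

Lemma far_sandwich x a y T : zle x a -> zle a y ->
  (forall t, -T < t < T -> a <> shift x t) -> (forall t, -T < t < T -> a <> shift y t) ->
  forall w, -(2 * T) < w < 2 * T -> y <> shift x w.
Proof.
  intros Hxa Hay Hfx Hfy w Hw E. rewrite E in Hay.
  destruct (zle_shift_interval Hxa Hay) as [w' [Hw' Ea]].
  destruct (Z_lt_le_dec w' T).
  - apply (Hfx w'); [lia | exact Ea].
  - apply (Hfy (w' - w)); [lia|]. rewrite E, shift_shift, Ea. f_equal; lia.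
Qed.

End ZorderFacts.

Definition zorder_rev (O : zorder) : zorder.
Proof.
  refine (Build_zorder O (fun a b => zle b a) (fun a t => shift a (- t)) origin
            _ _ _ _ _ _ _ _ _); simpl.
  - apply zle_refl.
  - intros a b c Hab Hbc. exact (zle_trans Hbc Hab).
  - intros a b Hab Hba. now apply zle_antisym.
  - intros a b. destruct (zle_total a b); auto.
  - intro a. apply shift0.
  - intros a t u. rewrite shift_shift. f_equal; lia.
  - intros a t u. rewrite zle_shift2. lia.
  - intros a b t. apply zle_shift_mono.
  - intros a b t Hba Hb.
    rewrite <- (shift_opp a (- t)), Z.opp_involutive in Hba.
    destruct (zle_shift_interval Hb Hba) as [w [Hw E]].
    exists (t - w). split; [lia|]. rewrite E, shift_shift. f_equal; lia.
Defined.

Definition agree {O1 O2 : zorder} (T : Z) (a1 b1 : O1) (a2 b2 : O2) : Prop :=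
  (forall t, -T < t < T -> (b1 = shift a1 t <-> b2 = shift a2 t)) /\
  (zle a1 b1 <-> zle a2 b2).

Section Agree.
Context {O1 O2 : zorder}.

Lemma agree_eq T (a1 b1 : O1) (a2 b2 : O2) : 0 < T ->
  agree T a1 b1 a2 b2 -> (b1 = a1 <-> b2 = a2).
Proof.
  intros HT [Heq _]. specialize (Heq 0 ltac:(lia)). now rewrite !shift0 in Heq.
Qed.

Lemma agree_weaken T T' (a1 b1 : O1) (a2 b2 : O2) : T' <= T ->
  agree T a1 b1 a2 b2 -> agree T' a1 b1 a2 b2.
Proof. intros HT [Heq Hle]. split; auto. intros t Ht. apply Heq; lia. Qed.

Lemma agree_flip T (a1 b1 : O1) (a2 b2 : O2) : 0 < T ->
  agree T a1 b1 a2 b2 -> agree T b1 a1 b2 a2.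
Proof.
  intros HT Hag. pose proof (agree_eq _ _ _ _ _ HT Hag) as Heq0.
  destruct Hag as [Heq Hle]. split.
  - intros t Ht. rewrite (eq_shift_sym b1), (eq_shift_sym b2). apply Heq; lia.
  - rewrite (zle_flip_iff a1 b1), (zle_flip_iff a2 b2). tauto.
Qed.

Lemma agree_swap T (a1 b1 : O1) (a2 b2 : O2) : agree T a1 b1 a2 b2 -> agree T a2 b2 a1 b1.
Proof. intros [Heq Hle]. split; [intros t Ht; symmetry; auto | tauto]. Qed.

Lemma agree_refl T (a1 : O1) (a2 : O2) : agree T a1 a1 a2 a2.
Proof.
  split; [intros t _; rewrite !shift_fixed_iff; tauto | split; intros _; apply zle_refl].
Qed.

Lemma agree_rev_iff T (a1 b1 : O1) (a2 b2 : O2) : 0 < T ->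
  (@agree (zorder_rev O1) (zorder_rev O2) T a1 b1 a2 b2 <-> agree T a1 b1 a2 b2).
Proof.
  intro HT. unfold agree; simpl.
  assert (Hopp : forall t, -T < t < T -> -T < - t < T) by (intros; lia).
  split; intros [Heq Hle]; split.
  - intros t Ht. specialize (Heq (- t) (Hopp t Ht)). now rewrite Z.opp_involutive in Heq.
  - specialize (Heq 0 ltac:(lia)). simpl in Heq. rewrite !shift0 in Heq.
    assert (Heq' : a1 = b1 <-> a2 = b2) by (split; intro; symmetry; apply Heq; auto).
    rewrite (zle_flip_iff b1 a1), (zle_flip_iff b2 a2). tauto.
  - intros t Ht. apply Heq, Hopp, Ht.
  - specialize (Heq 0 ltac:(lia)). rewrite !shift0 in Heq.
    rewrite (zle_flip_iff a1 b1), (zle_flip_iff a2 b2). tauto.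
Qed.

End Agree.

(** * Back and forth *)

(** Finite tuples of points are indexed by [option nat], [None] standing for the origin. *)
Definition valid_index (k : nat) (u : option nat) : Prop :=
  match u with None => True | Some i => (i < k)%nat end.

Lemma valid_index_S k u : valid_index (S k) u -> valid_index k u \/ u = Some k.
Proof.
  destruct u as [i|]; simpl; [|auto].
  intro; destruct (Nat.eq_dec i k) as [->|]; [right|left]; auto; lia.
Qed.

Lemma valid_index_lift k u : valid_index k u -> valid_index (S k) u.
Proof. destruct u; simpl; lia. Qed.

Lemma exists_max_index {O : zorder} k (p : option nat -> O) (P : option nat -> Prop) :
  (exists u, valid_index k u /\ P u) ->
  exists m, valid_index k m /\ P m /\ forall u, valid_index k u -> P u -> zle (p u) (p m).
Proof.
  induction k as [|k IH]; intros [u [Hu Pu]].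
  - destruct u as [i|]; simpl in Hu; [lia|].
    exists None. repeat split; auto.
    intros [i|] Hi _; simpl in Hi; [lia | apply zle_refl].
  - destruct (classic (exists u, valid_index k u /\ P u)) as [Hex | Hnone].
    + destruct (IH Hex) as [m [Hm [Pm Hmax]]].
      destruct (classic (P (Some k) /\ zle (p m) (p (Some k)))) as [[Pk Hmk] | Hk].
      * exists (Some k). repeat split; simpl; auto.
        intros v Hv Pv. destruct (valid_index_S _ _ Hv) as [Hv' | ->]; [|apply zle_refl].
        exact (zle_trans (Hmax v Hv' Pv) Hmk).
      * exists m. repeat split; auto using valid_index_lift.
        intros v Hv Pv. destruct (valid_index_S _ _ Hv) as [Hv' | ->]; auto.
        destruct (zle_total (p m) (p (Some k))); tauto.
    + destruct (valid_index_S _ _ Hu) as [Hu' | ->]; [exfalso; eauto|].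
      exists (Some k). repeat split; simpl; auto.
      intros v Hv Pv. destruct (valid_index_S _ _ Hv) as [Hv' | ->]; [exfalso; eauto|].
      apply zle_refl.
Qed.

Section Forth.
Context {O1 O2 : zorder} (k : nat) (p : option nat -> O1) (q : option nat -> O2) (T : Z).
Hypothesis T_pos : 0 < T.
Hypothesis pq_agree : forall u v, valid_index k u -> valid_index k v ->
  agree (2 * T) (p u) (p v) (q u) (q v).

Lemma forth_near u t : valid_index k u -> -T < t < T ->
  forall v, valid_index k v -> agree T (p v) (shift (p u) t) (q v) (shift (q u) t).
Proof.
  intros Hu Ht v Hv. destruct (pq_agree u v Hu Hv) as [Heq _]. split.
  - intros s Hs. rewrite !shift_eq_shift. apply Heq; lia.
  - destruct (classic (exists w, -(2 * T) < w < 2 * T /\ p v = shift (p u) w))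
      as [[w [Hw Hpv]] | Hfar].
    + assert (Hqv : q v = shift (q u) w) by (apply Heq; auto).
      rewrite Hpv, Hqv, !zle_shift2. reflexivity.
    + assert (Hfar' : forall w, -(2 * T) < w < 2 * T -> q v <> shift (q u) w).
      { intros w Hw E. apply Hfar. exists w. split; [exact Hw|]. apply Heq; auto. }
      rewrite (zle_shift_far (p v) (p u) (2 * T) t), (zle_shift_far (q v) (q u) (2 * T) t)
        by first [lia | exact Hfar' | intros w Hw E; apply Hfar; eauto].
      apply (pq_agree v u Hv Hu).
Qed.

Lemma forth_far a ulo :
  (forall u t, valid_index k u -> -T < t < T -> a <> shift (p u) t) ->
  valid_index k ulo -> zle (p ulo) a ->
  (forall u, valid_index k u -> zle (p u) a -> zle (p u) (p ulo)) ->
  forall v, valid_index k v -> agree T (p v) a (q v) (shift (q ulo) T).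
Proof.
  intros Hfar Hulo Hloa Hmax v Hv.
  assert (Hfar_v : forall s, -T < s < T -> a <> shift (p v) s) by auto.
  destruct (zle_total (p v) a) as [Hva | Hav].
  - assert (Hq : zle (q v) (q ulo)) by (apply (pq_agree v ulo); auto).
    assert (Hb : zle (shift (q v) T) (shift (q ulo) T)) by (apply zle_shift_mono, Hq).
    split.
    + intros s Hs. split; intro E; exfalso; [exact (Hfar_v s Hs E)|].
      rewrite E, zle_shift2 in Hb. lia.
    + split; intros _; [|exact Hva].
      apply (zle_trans Hq), zle_shift_r; lia.
  - assert (Hgap : forall w, -(2 * T) < w < 2 * T -> q v <> shift (q ulo) w).
    { intros w Hw E. apply (far_sandwich (p ulo) a (p v) T Hloa Hav) with (w := w); auto.
      apply (pq_agree ulo v); auto. }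
    assert (Hqv : zle (shift (q ulo) (2 * T)) (q v)).
    { apply zle_shift_of_far; [|intros w Hw; apply Hgap; lia].
      apply (pq_agree ulo v); auto. exact (zle_trans Hloa Hav). }
    split.
    + intros s Hs. split; intro E; exfalso; [exact (Hfar_v s Hs E)|].
      apply shift_eq_shift in E. apply (Hgap (T - s)); [lia | exact E].
    + split; intro H; exfalso.
      * apply (Hfar_v 0); [lia|]. rewrite shift0. now apply zle_antisym.
      * pose proof (zle_trans Hqv H) as H2. apply zle_shift2 in H2. lia.
Qed.

Lemma forth_of_lower_bound a : (exists u, valid_index k u /\ zle (p u) a) ->
  exists b, forall v, valid_index k v -> agree T (p v) a (q v) b.
Proof.
  intro Hlo.
  destruct (classic (exists u t, valid_index k u /\ -T < t < T /\ a = shift (p u) t))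
    as [[u [t [Hu [Ht ->]]]] | Hfar].
  - exists (shift (q u) t). now apply forth_near.
  - destruct (exists_max_index k p (fun u => zle (p u) a) Hlo) as [ulo [Hulo [Hloa Hmax]]].
    exists (shift (q ulo) T). apply forth_far; auto.
    intros u t Hu Ht E. apply Hfar; eauto.
Qed.

End Forth.

Lemma forth {O1 O2 : zorder} k (p : option nat -> O1) (q : option nat -> O2) T : 0 < T ->
  (forall u v, valid_index k u -> valid_index k v -> agree (2 * T) (p u) (p v) (q u) (q v)) ->
  forall a, exists b, forall v, valid_index k v -> agree T (p v) a (q v) b.
Proof.
  intros HT Hpq a.
  destruct (zle_total (p None) a) as [Hlo | Hhi].
  - apply forth_of_lower_bound; auto. now exists None.
  - destruct (forth_of_lower_bound (O1 := zorder_rev O1) (O2 := zorder_rev O2) k p q T HT)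
      with (a := a) as [b Hb].
    + intros u v Hu Hv. apply agree_rev_iff; auto; lia.
    + now exists None.
    + exists b. intros v Hv. now apply agree_rev_iff, Hb.
Qed.

(** * The gadget poset *)

Inductive gadget (I : Type) : Type :=
| Bot | D | C | E | W | X (i : I) | Y (i : I) | J (i : I).
Arguments Bot {I}. Arguments D {I}. Arguments C {I}. Arguments E {I}. Arguments W {I}.
Arguments X {I}. Arguments Y {I}. Arguments J {I}.

Definition gle {O : zorder} (a b : gadget O) : Prop :=
  match a, b with
  | Bot, _ => True
  | D, (D | C) | C, C | E, (E | C | W) | W, W => True
  | X i, (D | C) => i = origin
  | X i, X j => i = j
  | X i, J j => i = j \/ i = shift j 1
  | Y i, (D | C) => zle i origin
  | Y _, W => True
  | Y i, Y j => zle i j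
  | Y i, J j => zle i (shift j 1)
  | J i, J j => i = j
  | _, _ => False
  end.

Section GadgetOrder.
Context {O : zorder}.
Implicit Types a b c : gadget O.

Lemma gle_refl a : gle a a.
Proof. destruct a; simpl; auto using zle_refl. Qed.

Lemma gle_trans a b c : gle a b -> gle b c -> gle a c.
Proof.
  destruct a, b, c; simpl; intuition; subst; eauto using zle_trans.
Qed.

Lemma gle_antisym a b : gle a b -> gle b a -> a = b.
Proof.
  destruct a, b; simpl; intuition; subst; auto; f_equal; auto using zle_antisym.
Qed.

End GadgetOrder.

Lemma gadget_principal_projective {O : zorder} (d : gadget O) :
  match d with Bot | E | X _ | Y _ => True | _ => False end ->
  projective_downset gle (fun z => gle z d).
Proof.
  intro Hd. split; [intros x y Hxy Hyd; exact (gle_trans _ _ _ Hxy Hyd)|].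
  intro y. destruct (classic (gle d y)) as [Hdy | Hdy].
  { exists d. repeat split; auto using gle_refl. }
  destruct d as [| | | | | i | i | i]; simpl in Hdy; try tauto.
  1, 2: exists Bot; repeat split; intros [| | | | | ? | ? | ?]; simpl; intros; subst; tauto.
  destruct y as [| | | | | j | j | j]; simpl in Hdy; try tauto;
    [exists Bot | exists (Y origin) | exists (Y origin) | exists Bot | exists Bot
    | exists (Y j) | exists (Y (shift j 1))];
    repeat split; simpl; auto using zle_refl;
    try (intros [| | | | | ? | ? | ?]; simpl; tauto).
  all: match goal with |- zle ?a ?b => destruct (zle_total b a); tauto end.
Qed.

(** * Elementary equivalence of gadgets *)

Definition gidx {O : zorder} (e : gadget O) : O :=
  match e with X i | Y i | J i => i | _ => origin end.

Definition gtag {I} (e : gadget I) : nat :=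
  match e with
  | Bot => 0 | D => 1 | C => 2 | E => 3 | W => 4 | X _ => 5 | Y _ => 6 | J _ => 7
  end.

Definition retag {I I'} (e : gadget I) (b : I') : gadget I' :=
  match e with
  | Bot => Bot | D => D | C => C | E => E | W => W | X _ => X b | Y _ => Y b | J _ => J b
  end.

Lemma gadget_eq_iff {O : zorder} (e f : gadget O) :
  e = f <-> gtag e = gtag f /\ gidx e = gidx f.
Proof.
  split; [intros ->; auto|].
  destruct e, f; simpl; intros [Ht Hi]; try discriminate; now subst.
Qed.

Lemma gtag_retag {I I'} (e : gadget I) (b : I') : gtag (retag e b) = gtag e.
Proof. now destruct e. Qed.

Lemma gidx_retag {O1 O2 : zorder} (e : gadget O1) (b : O2) :
  (gidx e = origin -> b = origin) -> gidx (retag e b) = b.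
Proof. destruct e; simpl; auto; intro H; symmetry; auto. Qed.

(** [2 <= T] because the order of a gadget sees distance 1 between indices. *)
Lemma gle_iff_of_agree {O1 O2 : zorder} T (e1 f1 : gadget O1) (e2 f2 : gadget O2) :
  2 <= T -> gtag e1 = gtag e2 -> gtag f1 = gtag f2 ->
  agree T (gidx e1) (gidx f1) (gidx e2) (gidx f2) ->
  agree T (gidx e1) origin (gidx e2) origin ->
  (gle e1 f1 <-> gle e2 f2) /\ (e1 = f1 <-> e2 = f2).
Proof.
  intros HT Te Tf Hef Heo.
  destruct (agree_flip T _ _ _ _ ltac:(lia) Hef) as [Hfe _].
  pose proof (Hfe 0 ltac:(lia)) as Heq. rewrite !shift0 in Heq.
  pose proof (Hfe 1 ltac:(lia)) as Hsucc.
  pose proof (agree_eq T _ _ _ _ ltac:(lia) (agree_flip T _ _ _ _ ltac:(lia) Heo)) as Horig.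
  destruct Hef as [_ Hle], Heo as [_ Hleo].
  assert (Hle1 : zle (gidx e1) (shift (gidx f1) 1) <-> zle (gidx e2) (shift (gidx f2) 1))
    by (rewrite !zle_shift1_iff; tauto).
  split.
  - destruct e1, e2; try discriminate Te; destruct f1, f2; try discriminate Tf;
      simpl in *; tauto.
  - rewrite !gadget_eq_iff, Te, Tf. tauto.
Qed.

Definition point {O : zorder} (r : nat -> gadget O) (u : option nat) : O :=
  match u with None => origin | Some i => gidx (r i) end.

Lemma point_scons_cases k u : valid_index (S k) u ->
  u = Some 0%nat \/ exists u', valid_index k u' /\
    forall (O : zorder) (e : gadget O) r, point (scons e r) u = point r u'.
Proof.
  destruct u as [[|i]|]; simpl; intro Hu.
  - now left.
  - right. exists (Some i). split; [simpl; lia | reflexivity].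
  - right. exists None. split; [exact I | reflexivity].
Qed.

Fixpoint ef_scale (n : nat) : Z :=
  match n with 0%nat => 2 | S n => 2 * ef_scale n end.

Lemma ef_scale_ge2 n : 2 <= ef_scale n.
Proof. induction n; cbn [ef_scale]; lia. Qed.

Definition ef_position {O1 O2 : zorder} (n k : nat)
    (r1 : nat -> gadget O1) (r2 : nat -> gadget O2) : Prop :=
  (forall i, (i < k)%nat -> gtag (r1 i) = gtag (r2 i)) /\
  forall u v, valid_index k u -> valid_index k v ->
    agree (ef_scale n) (point r1 u) (point r1 v) (point r2 u) (point r2 v).

Section EFPositions.
Context {O1 O2 : zorder}.

Lemma ef_position_sym n k (r1 : nat -> gadget O1) (r2 : nat -> gadget O2) :
  ef_position n k r1 r2 -> ef_position n k r2 r1.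
Proof.
  intros [Htag Hag]. split; [intros; symmetry; auto | intros; apply agree_swap; auto].
Qed.

Lemma ef_position_atomic n k (r1 : nat -> gadget O1) (r2 : nat -> gadget O2) i j :
  ef_position n k r1 r2 -> (i < k)%nat -> (j < k)%nat ->
  (gle (r1 i) (r1 j) <-> gle (r2 i) (r2 j)) /\ (r1 i = r1 j <-> r2 i = r2 j).
Proof.
  intros [Htag Hag] Hi Hj.
  apply (gle_iff_of_agree (ef_scale n)); auto using ef_scale_ge2.
  - now apply (Hag (Some i) (Some j)).
  - now apply (Hag (Some i) None).
Qed.

Lemma ef_position_extend n k (r1 : nat -> gadget O1) (r2 : nat -> gadget O2) :
  ef_position (S n) k r1 r2 ->
  forall e1, exists e2, ef_position n (S k) (scons e1 r1) (scons e2 r2).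
Proof.
  intros [Htag Hag] e1.
  pose proof (ef_scale_ge2 n) as HT.
  destruct (forth k (point r1) (point r2) (ef_scale n) ltac:(lia) Hag (gidx e1)) as [b Hb].
  assert (Hidx : gidx (retag e1 b) = b).
  { apply gidx_retag. intro E. apply (agree_eq (ef_scale n) _ _ _ _ ltac:(lia) (Hb None I)), E. }
  exists (retag e1 b). split.
  - intros [|i] Hi; simpl; [now rewrite gtag_retag | apply Htag; lia].
  - intros u v Hu Hv.
    destruct (point_scons_cases k u Hu) as [-> | [u' [Hu' Pu]]];
      destruct (point_scons_cases k v Hv) as [-> | [v' [Hv' Pv]]];
      rewrite ?Pu, ?Pv; simpl; rewrite ?Hidx.
    + apply agree_refl.
    + apply agree_flip, Hb; auto; lia.
    + now apply Hb.
    + apply (agree_weaken (ef_scale (S n))); [cbn [ef_scale]; lia | auto].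
Qed.

End EFPositions.

Fixpoint qdepth (phi : formula) : nat :=
  match phi with
  | FRel _ _ | FEq _ _ | FFalse => 0
  | FNot p => qdepth p
  | FAnd p q | FOr p q | FImp p q => Nat.max (qdepth p) (qdepth q)
  | FAll p | FEx p => S (qdepth p)
  end.

Lemma sat_iff_of_ef_position {O1 O2 : zorder} phi : forall n k r1 r2,
  (qdepth phi <= n)%nat -> bounded k phi -> ef_position n k r1 r2 ->
  (sat (@gle O1) r1 phi <-> sat (@gle O2) r2 phi).
Proof.
  induction phi as [i j | i j | | phi IH | phi1 IH1 phi2 IH2 | phi1 IH1 phi2 IH2
                   | phi1 IH1 phi2 IH2 | phi IH | phi IH];
    intros n k r1 r2 Hd Hb Hpos; simpl in *.
  - apply (ef_position_atomic n k r1 r2); tauto.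
  - apply (ef_position_atomic n k r1 r2); tauto.
  - tauto.
  - now rewrite (IH n k r1 r2).
  - rewrite (IH1 n k r1 r2), (IH2 n k r1 r2) by (tauto || lia). tauto.
  - rewrite (IH1 n k r1 r2), (IH2 n k r1 r2) by (tauto || lia). tauto.
  - rewrite (IH1 n k r1 r2), (IH2 n k r1 r2) by (tauto || lia). tauto.
  - destruct n as [|n]; [lia|]. split; intros H a.
    + destruct (ef_position_extend n k r2 r1 (ef_position_sym _ _ _ _ Hpos) a) as [a1 Hpos1].
      rewrite <- (IH n (S k) (scons a1 r1) (scons a r2)); auto using ef_position_sym; lia.
    + destruct (ef_position_extend n k r1 r2 Hpos a) as [a2 Hpos2].
      rewrite (IH n (S k) (scons a r1) (scons a2 r2)); auto; lia.
  - destruct n as [|n]; [lia|]. split; intros [a H].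
    + destruct (ef_position_extend n k r1 r2 Hpos a) as [a2 Hpos2].
      exists a2. rewrite <- (IH n (S k) (scons a r1) (scons a2 r2)); auto; lia.
    + destruct (ef_position_extend n k r2 r1 (ef_position_sym _ _ _ _ Hpos) a) as [a1 Hpos1].
      exists a1. rewrite (IH n (S k) (scons a1 r1) (scons a r2)); auto using ef_position_sym; lia.
Qed.

Lemma sat_sentence_iff (O1 O2 : zorder) phi r1 r2 : sentence phi ->
  (sat (@gle O1) r1 phi <-> sat (@gle O2) r2 phi).
Proof.
  intro Hphi. apply (sat_iff_of_ef_position phi (qdepth phi) 0); auto.
  split; [intros; lia|].
  intros [i|] [j|]; simpl; intros; try lia. apply agree_refl.
Qed.

Lemma gadget_models_transfer (O1 O2 : zorder) (Th : formula -> Prop) :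
  (forall phi, Th phi -> sentence phi) -> models (@gle O1) Th -> models (@gle O2) Th.
Proof.
  intros Hsent H1 phi Hphi rho.
  apply (sat_sentence_iff O1 O2 phi (fun _ => Bot)); [exact (Hsent phi Hphi) | apply H1, Hphi].
Qed.

Definition zorder_Z : zorder.
Proof.
  refine (Build_zorder Z Z.le Z.add 0 _ _ _ _ _ _ _ _ _); try (intros; lia).
  intros a b t Hab Hb. exists (b - a). lia.
Defined.

(** ℤ ⊕ ℤ as [bool * Z], the [false] copy below the [true] one. *)
Definition zle_lex (a b : bool * Z) : Prop :=
  match a, b with
  | (false, _), (true, _) => True
  | (true, _), (false, _) => False
  | (_, x), (_, y) => x <= y
  end.

Definition zorder_ZZ : zorder.
Proof.
  refine (Build_zorder (bool * Z) zle_lex (fun a t => (fst a, snd a + t)) (false, 0)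
            _ _ _ _ _ _ _ _ _).
  - intros [[|] x]; simpl; lia.
  - intros [[|] x] [[|] y] [[|] z]; simpl; auto; lia.
  - intros [[|] x] [[|] y]; simpl; intros; try contradiction; f_equal; lia.
  - intros [[|] x] [[|] y]; simpl; auto; lia.
  - intros [b x]; simpl; f_equal; lia.
  - intros [b x] t u; simpl; f_equal; lia.
  - intros [[|] x] t u; simpl; lia.
  - intros [[|] x] [[|] y] t; simpl; auto; lia.
  - intros [[|] x] [[|] y] t; simpl; intros Hxy Hy; try contradiction;
      exists (y - x); (split; [lia | f_equal; lia]).
Defined.

Lemma gadget_Z_ladder (F : gadget zorder_Z -> Prop) :
  projective_downset gle F -> F D -> forall n : nat, F (X (Z.of_nat n)) /\ F (Y (Z.of_nat n)).
Proof.
  intros [F_down F_max] F_D n.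
  induction n as [|n [FX FY]].
  - split; apply (F_down _ D); simpl; auto; lia.
  - destruct (F_max (J (Z.of_nat n))) as [m [Fm [HmJ Hmax]]].
    assert (HXm : @gle zorder_Z (X (Z.of_nat n)) m) by (apply Hmax; simpl; auto).
    assert (HYm : @gle zorder_Z (Y (Z.of_nat n)) m) by (apply Hmax; simpl; auto; lia).
    assert (m = J (Z.of_nat n)) as ->.
    { destruct m; simpl in *; try contradiction; now subst. }
    rewrite Nat2Z.inj_succ. split; apply (F_down _ (J (Z.of_nat n))); simpl; auto; lia.
Qed.

Lemma gadget_Z_not_down_poset : ~ down_poset (@gle zorder_Z).
Proof.
  intro Hdown.
  destruct (projective_of_down_poset _ Hdown C D I) as [F [HF [F_D [_ HD]]]].
  assert (F_E : ~ F E) by (intro F_E; exact (HD E F_E I)).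
  pose proof (gadget_Z_ladder F HF F_D) as Hladder.
  destruct HF as [F_down F_max], (F_max W) as [m [Fm [HmW Hmax]]].
  assert (HYm : forall n : nat, @gle zorder_Z (Y (Z.of_nat n)) m)
    by (intro n; apply Hmax; [apply Hladder | exact I]).
  destruct m; simpl in *; try contradiction.
  - exact (HYm 0%nat).
  - exact (F_E (F_down E W I Fm)).
  - specialize (HYm (Z.to_nat (i + 1))). lia.
Qed.

Definition gadget_ZZ_fixed (z : gadget zorder_ZZ) : Prop :=
  match z with
  | Bot | D => True
  | X (b, _) | J (b, _) => b = false
  | Y i => zle_lex i (true, 0)
  | _ => False
  end.

Lemma gadget_ZZ_fixed_projective : projective_downset gle gadget_ZZ_fixed.
Proof.
  split.
  - intros x y Hxy Fy.
    destruct y as [| | | | |[[|] z]|[[|] z]|[[|] z]], x as [| | | | |[[|] z']|[[|] z']|[[|] z']];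
      simpl in *; intuition (try discriminate; try congruence; lia).
  - intro y. destruct (classic (gadget_ZZ_fixed y)) as [Fy | Fy].
    { exists y. repeat split; auto using gle_refl. }
    destruct y as [| | | | |[[|] z]|[[|] z]|[[|] z]]; simpl in Fy; try tauto;
      [exists D | exists Bot | exists (Y (true, 0)) | exists Bot | exists (Y (true, 0))
      | exists (Y (true, Z.min (z + 1) 0))];
      repeat split; simpl; try lia; auto;
      intros [| | | | |[[|] ?]|[[|] ?]|[[|] ?]]; simpl; intuition (try discriminate; lia).
Qed.

Lemma gadget_ZZ_down_poset : down_poset (@gle zorder_ZZ).
Proof.
  apply down_poset_of_projective; [apply gle_refl | apply gle_trans | apply gle_antisym |].
  intros c d Hdc. destruct (classic (d = c)) as [<- | Hne].
  { exists (fun _ => True). split; [apply projective_downset_full, gle_refl|].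
    repeat split; auto using gle_refl. }
  assert (Hprincipal : match d with Bot | E | X _ | Y _ => True | _ => False end ->
            exists F, projective_downset gle F /\ greatest_below gle F c d).
  { intro Hd. exists (fun z => gle z d).
    split; [now apply gadget_principal_projective | repeat split; auto using gle_refl]. }
  destruct d; try (apply Hprincipal; exact I);
    destruct c; simpl in Hdc; try contradiction; try (exfalso; congruence).
  exists gadget_ZZ_fixed. split; [exact gadget_ZZ_fixed_projective|].
  repeat split; intros [| | | | | ? | ? | ?]; simpl; tauto.
Qed.

Theorem theorem2 :
  ~ exists T : formula -> Prop,
      (forall phi, T phi -> sentence phi) /\
      (forall (M : Type) (R : M -> M -> Prop),
          inhabited M -> (models R T <-> down_poset R)).
Proof.
  intros [T [Hsent Hmodels]].
  apply gadget_Z_not_down_poset, (Hmodels _ _ (inhabits Bot)).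
  apply (gadget_models_transfer zorder_ZZ); [exact Hsent|].
  apply (Hmodels _ _ (inhabits Bot)), gadget_ZZ_down_poset.
Qed.
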